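(* Let $d \geq 3$, let $C \subset \mathbb{R}^d$ be a smooth $d$-dimensional combinatorial cube with faces labeled $F_I^J$ via a fixed face-poset isomorphism with $[0,1]^d$, and let $x,y,z \in \{1,\dots,d\}$ be distinct. Suppose that the faces $F_{xz}$ and $F_{x\bar z}$ are parallel and that the faces $F_{yz}$ and $F_{y\bar z}$ are parallel. Then $F_z$ is parallel to $F_{\bar z}$.
   Context: A lattice polytope is the convex hull of finitely many points of $\mathbb{Z}^d$. A $d$-dimensional polytope is simple if each vertex lies in exactly $d$ edges; the primitive edge directions at a vertex are the smallest lattice vectors along its incident edges; a $d$-dimensional lattice polytope in $\mathbb{R}^d$ is smooth if it is simple and at every vertex the primitive edge directions form a basis of $\mathbb{Z}^d$. A $d$-dimensional combinatorial cube is a polytope $C$ whose face poset is isomorphic to that of $[0,1]^d$. For disjoint $I,J \subseteq \{1,\dots,d\}$ the face of $[0,1]^d$ given by $x_k=0$ for $k\in I$ and $x_k = 1$ for $k \in J$ is denoted $F_I^J$, and the corresponding face of $C$ under the fixed isomorphism is also denoted $F_I^J$. Notation: elements of $J$ are written with a bar and elements of $I$ without, e.g. $F_{x\bar z} = F_{\{x\}}^{\{z\}}$, $F_{\bar z} = F_{\emptyset}^{\{z\}}$, $F_z = F_{\{z\}}^{\emptyset}$. Two faces $F,G$ are parallel if $\mathrm{lin}(F)=\mathrm{lin}(G)$, where $\mathrm{lin}(F)$ is the linear subspace parallel to the affine hull of $F$. *)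

From HB Require Import structures.
From mathcomp Require Import all_boot all_order all_algebra.
From mathcomp Require Import reals.
Set Implicit Arguments. Unset Strict Implicit. Unset Printing Implicit Defensive.
Import Order.TTheory GRing.Theory Num.Theory.
Local Open Scope ring_scope.

Section Polytopes.
Variables (R : realType) (d : nat).
Local Notation pt := 'rV[R]_d.

Definition seteq (F G : pt -> Prop) : Prop := forall x, F x <-> G x.
Definition subset (F G : pt -> Prop) : Prop := forall x, F x -> G x.

Definition dot (a x : pt) : R := \sum_(j < d) a 0 j * x 0 j.

Definition is_lattice_point (x : pt) : Prop := forall j, x 0 j \is a Num.int.

Definition conv (S : pt -> Prop) : pt -> Prop := fun x =>
  exists (n : nat) (lam : 'I_n -> R) (p : 'I_n -> pt),
    (forall i, 0 <= lam i) /\ \sum_(i < n) lam i = 1 /\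
    (forall i, S (p i)) /\ x = \sum_(i < n) lam i *: p i.

Definition lattice_polytope (P : pt -> Prop) : Prop :=
  exists (n : nat) (p : 'I_n -> pt),
    (forall i, is_lattice_point (p i)) /\
    seteq P (conv (fun x => exists i, x = p i)).

(* faces: intersections with supporting hyperplanes (includes the empty face and P) *)
Definition is_face (P F : pt -> Prop) : Prop :=
  exists (a : pt) (b : R), (forall x, P x -> dot a x <= b) /\
    seteq F (fun x => P x /\ dot a x = b).

(* lin(F): the linear subspace parallel to the affine hull of F *)
Definition lin (F : pt -> Prop) : pt -> Prop := fun w =>
  exists (n : nat) (c : 'I_n -> R) (p q : 'I_n -> pt),
    (forall i, F (p i) /\ F (q i)) /\ w = \sum_(i < n) c i *: (p i - q i).

Definition parallel (F G : pt -> Prop) : Prop := seteq (lin F) (lin G).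

Definition full_dim (P : pt -> Prop) : Prop := seteq (lin P) (fun _ => True).

Definition is_vertex (P : pt -> Prop) (p : pt) : Prop := is_face P (fun x => x = p).

Definition is_edge (P E : pt -> Prop) : Prop :=
  is_face P E /\ exists w : pt, w != 0 /\ seteq (lin E) (fun v => exists c : R, v = c *: w).

Definition prim_dir (p : pt) (E : pt -> Prop) (u : pt) : Prop :=
  is_lattice_point u /\
  (exists (t : R) (q : pt), 0 < t /\ E q /\ q != p /\ u = t *: (q - p)) /\
  (forall s : R, 0 < s -> is_lattice_point (s *: u) -> 1 <= s).

Definition Zbasis (u : 'I_d -> pt) : Prop :=
  (forall i, is_lattice_point (u i)) /\
  (forall z, is_lattice_point z ->
     exists k : 'I_d -> int, z = \sum_(i < d) (k i)%:~R *: u i) /\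
  (forall k : 'I_d -> int, \sum_(i < d) (k i)%:~R *: u i = 0 -> forall i, k i = 0).

(* smooth d-dimensional lattice polytope: simple (each vertex lies in exactly d
   edges, enumerated injectively by e) and the primitive edge directions at every
   vertex form a basis of Z^d *)
Definition smooth (P : pt -> Prop) : Prop :=
  lattice_polytope P /\ full_dim P /\
  forall p, is_vertex P p ->
    exists (e : 'I_d -> (pt -> Prop)) (u : 'I_d -> pt),
      (forall i j, seteq (e i) (e j) -> i = j) /\
      (forall i, is_edge P (e i) /\ e i p) /\
      (forall E, is_edge P E -> E p -> exists i, seteq (e i) E) /\
      (forall i, prim_dir p (e i) (u i)) /\
      Zbasis u.

Definition unit_cube : pt -> Prop := fun x => forall k, 0 <= x 0 k <= 1.

Definition cube_face (I J : {set 'I_d}) : pt -> Prop := fun x =>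
  unit_cube x /\ (forall k, k \in I -> x 0 k = 0) /\ (forall k, k \in J -> x 0 k = 1).

(* phi is an isomorphism of face posets (ordered by inclusion) from the faces of
   [0,1]^d onto the faces of C; faces are identified up to set equality *)
Definition face_iso (C : pt -> Prop) (phi : (pt -> Prop) -> (pt -> Prop)) : Prop :=
  (forall F, is_face unit_cube F -> is_face C (phi F)) /\
  (forall F G, is_face unit_cube F -> is_face unit_cube G -> seteq F G ->
     seteq (phi F) (phi G)) /\
  (forall G, is_face C G -> exists F, is_face unit_cube F /\ seteq (phi F) G) /\
  (forall F G, is_face unit_cube F -> is_face unit_cube G ->
     (subset F G <-> subset (phi F) (phi G))).

Definition comb_cube (C : pt -> Prop) : Prop := exists phi, face_iso C phi.

Definition Cface (phi : (pt -> Prop) -> (pt -> Prop)) (I J : {set 'I_d}) : pt -> Prop :=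
  phi (cube_face I J).

End Polytopes.

From Pilot Require Import Defs.
From HB Require Import structures.
From mathcomp Require Import all_boot all_order all_algebra.
From mathcomp Require Import reals boolp.
From mathcomp Require Import ring zify.
Import Order.TTheory GRing.Theory Num.Theory.
Set Implicit Arguments. Unset Strict Implicit. Unset Printing Implicit Defensive.

(* Write L(F) for the linear space parallel to a face F of C.  If two faces G1, G2
   of C share a point and L(G2) <= L(G1), then G2 <= G1, because a functional
   supporting G1 vanishes on L(G1).  Hence dim L is strictly monotone on the face
   lattice of C, which is that of the cube, and dim L(F_I^J) = d - |I u J|.  The
   faces F_xz and F_yz meet in F_xyz but are not nested, so L(F_xz) and L(F_yz)
   are distinct hyperplanes of L(F_z), whence L(F_z) = L(F_xz) + L(F_yz).  By
   hypothesis this is L(F_x\bar z) + L(F_y\bar z), which lies in L(F_\bar z); both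
   have dimension d - 1, so L(F_z) = L(F_\bar z). *)

Section RowSpaces.
Variable F : fieldType.
Local Open Scope ring_scope.

Lemma subspace_rowspace n (S : 'rV[F]_n -> Prop) :
  S 0 -> (forall a u v, S u -> S v -> S (a *: u + v)) ->
  exists M : 'M[F]_n, forall v, S v <-> (v <= M)%MS.
Proof.
move=> S0 S_lin.
pose inS (M : 'M[F]_n) := forall v, (v <= M)%MS -> S v.
pose has_rank (r : nat) := `[< exists M, inS M /\ \rank M = r >].
have rank0 : exists r, has_rank r.
  exists 0%N; apply/asboolP; exists 0; split; last exact: mxrank0.
  by move=> v; rewrite submx0 => /eqP ->.
have rank_ub r : has_rank r -> (r <= n)%N.
  by move=> /asboolP [M [_ <-]]; exact: rank_leq_col.
case: (ex_maxnP rank0 rank_ub) => _ /asboolP [M [SM <-]] rank_max.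
exists M => v; split=> [Sv|]; last exact: SM.
apply: contrapT => /negP vNM.
have SMv : inS <<(M + v)%MS>>%MS.
  move=> w; rewrite genmxE => /sub_addsmxP [[u1 u2] /= ->].
  rewrite [u2]mx11_scalar mul_scalar_mx addrC.
  by apply: S_lin => //; apply: SM; exact: submxMl.
have /rank_max : has_rank (\rank <<(M + v)%MS>>%MS).
  by apply/asboolP; exists <<(M + v)%MS>>%MS.
apply/negP; rewrite -ltnNge genmxE; apply: rank_ltmx.
by rewrite ltmxE addsmxSl addsmx_sub submx_refl.
Qed.

Lemma addsmx_eq_codim1 m1 m2 m n (A : 'M[F]_(m1, n))
    (B : 'M[F]_(m2, n)) (M : 'M[F]_(m, n)) :
  (A <= M)%MS -> (B <= M)%MS -> (\rank A).+1 = \rank M -> ~~ (B <= A)%MS ->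
  (A + B == M)%MS.
Proof.
move=> sAM sBM rAM nBA.
have sABM : (A + B <= M)%MS by rewrite addsmx_sub sAM.
rewrite -(mxrank_leqif_eq sABM).2 eqn_leq mxrankS //= -rAM.
by apply: rank_ltmx; rewrite ltmxE addsmxSl addsmx_sub submx_refl.
Qed.

End RowSpaces.

Section LinearHull.
Variables (R : realType) (d : nat).
Local Open Scope ring_scope.
Local Notation pt := 'rV[R]_d.

Lemma lin0 (F : pt -> Prop) : lin F 0.
Proof.
by exists 0%N, (fun _ => 0), (fun _ => 0), (fun _ => 0); split; [case | rewrite big_ord0].
Qed.

Lemma lin_lincomb (F : pt -> Prop) a u v : lin F u -> lin F v -> lin F (a *: u + v).
Proof.
move=> [m [c [p [q [Fpq ->]]]]] [n [c' [p' [q' [Fpq' ->]]]]].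
pose glue T (f : 'I_m -> T) (g : 'I_n -> T) (i : 'I_(m + n)) :=
  match split i with inl j => f j | inr k => g k end.
exists (m + n)%N, (glue _ (fun j => a * c j) c'), (glue _ p p'), (glue _ q q'); split.
  by move=> i; rewrite /glue; case: split.
rewrite big_split_ord scaler_sumr /glue; congr (_ + _); apply: eq_bigr => j _.
  by rewrite (unsplitK (inl _)) scalerA.
by rewrite (unsplitK (inr _)).
Qed.

Definition linmx (F : pt -> Prop) : 'M[R]_d :=
  sval (cid (subspace_rowspace (lin0 F) (@lin_lincomb F))).

Lemma linmxP F v : lin F v <-> (v <= linmx F)%MS.
Proof. exact: (svalP (cid (subspace_rowspace (lin0 F) (@lin_lincomb F))) v). Qed.

Lemma linmxS (F G : pt -> Prop) : Defs.subset F G -> (linmx F <= linmx G)%MS.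
Proof.
move=> FG; apply/row_subP => i; apply/linmxP; have /linmxP := row_sub i (linmx F).
move=> [n [c [p [q [Fpq ->]]]]]; exists n, c, p, q; split=> // j.
by have [? ?] := Fpq j; split; apply: FG.
Qed.

Lemma parallel_eqmx (F G : pt -> Prop) : parallel F G <-> (linmx F == linmx G)%MS.
Proof.
split=> [FG | /eqmxP FG v].
  by apply/andP; split; apply/row_subP => i; apply/linmxP/FG/linmxP; exact: row_sub.
by split=> /linmxP lv; apply/linmxP; [rewrite -FG | rewrite FG].
Qed.

Lemma dotB (a u w : pt) : dot a (u - w) = dot a u - dot a w.
Proof. by rewrite /dot -sumrB; apply: eq_bigr => j _; rewrite !mxE mulrBr. Qed.

Lemma dot_sumZ (a : pt) n (c : 'I_n -> R) (f : 'I_n -> pt) :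
  dot a (\sum_(i < n) c i *: f i) = \sum_(i < n) c i * dot a (f i).
Proof.
rewrite /dot; under eq_bigr => j _ do rewrite summxE mulr_sumr.
rewrite exchange_big; apply: eq_bigr => i _; rewrite mulr_sumr.
by apply: eq_bigr => j _; rewrite !mxE; ring.
Qed.

Lemma dot_lin_eq0 (F : pt -> Prop) a b v :
  (forall x, F x -> dot a x = b) -> lin F v -> dot a v = 0.
Proof.
move=> Fab [n [c [p [q [Fpq ->]]]]]; rewrite dot_sumZ big1 // => i _.
by have [/Fab Fp /Fab Fq] := Fpq i; rewrite dotB Fp Fq subrr mulr0.
Qed.

Lemma is_face_empty (P : pt -> Prop) : is_face P (fun _ => False).
Proof.
have dot0 x : dot 0 x = 0 by rewrite /dot big1 // => j _; rewrite mxE mul0r.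
exists 0, 1; split=> [x _|x]; first by rewrite dot0 ler01.
by rewrite dot0; split=> // [[_ /eqP]]; rewrite eq_sym oner_eq0.
Qed.

Lemma face_linmx_subset (P G1 G2 : pt -> Prop) p :
  is_face P G1 -> is_face P G2 -> G1 p -> G2 p ->
  (linmx G2 <= linmx G1)%MS -> Defs.subset G2 G1.
Proof.
move=> [a [b [_ G1E]]] [a2 [b2 [_ G2E]]] G1p G2p sub q G2q.
have [_ ap] := (G1E p).1 G1p.
have [Pq _] := (G2E q).1 G2q.
have : lin G1 (q - p).
  apply/linmxP; apply: submx_trans sub; apply/linmxP.
  exists 1%N, (fun _ => 1), (fun _ => q), (fun _ => p).
  by split=> //; rewrite big_ord1 scale1r.
move/(dot_lin_eq0 (fun x G1x => ((G1E x).1 G1x).2)).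
by rewrite dotB ap => /eqP; rewrite subr_eq0 => /eqP aq; apply/G1E.
Qed.

Lemma face_rank_lt (P G1 G2 : pt -> Prop) p :
  is_face P G1 -> is_face P G2 -> G1 p ->
  Defs.subset G1 G2 -> ~ Defs.subset G2 G1 ->
  (\rank (linmx G1) < \rank (linmx G2))%N.
Proof.
move=> f1 f2 G1p s12 ns; apply: rank_ltmx; rewrite ltmxE linmxS //=.
by apply/negP => /(face_linmx_subset f1 f2 G1p (s12 p G1p)).
Qed.

End LinearHull.

Section Cube.
Context {R : realType} {d : nat}.
Local Open Scope ring_scope.
Local Notation pt := 'rV[R]_d.
Implicit Types I J S : {set 'I_d}.

Definition cube_vertex S : pt := \row_k (k \in S)%:R.

Lemma cube_faceS I J I' J' : I' \subset I -> J' \subset J ->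
  Defs.subset (@cube_face R d I J) (cube_face I' J').
Proof.
move=> sI sJ x [cx [xI xJ]]; split=> //.
by split=> k kin; [apply: xI; apply: (subsetP sI) | apply: xJ; apply: (subsetP sJ)].
Qed.

Lemma cube_face_vertex I J S :
  cube_face I J (cube_vertex S) <-> [disjoint I & S] /\ J \subset S.
Proof.
split=> [[_ [vI vJ]] | [dIS sJS]].
  split; [rewrite disjoint_subset | ]; apply/subsetP => k.
    by move/vI; rewrite mxE inE; case: (k \in S) => // /eqP; rewrite oner_eq0.
  by move/vJ; rewrite mxE; case: (k \in S) => // /eqP; rewrite eq_sym oner_eq0.
split; [|split] => k; rewrite mxE.
- by case: (k \in S); rewrite ?ler01 ?lexx.
- by move/(disjointFr dIS) ->.
- by move/(subsetP sJS) ->.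
Qed.

(* Supporting functional [x |-> sum_(k in J) x_k - sum_(k in I) x_k] at level
   [#|J|]; its slack is the sum of the nonnegative terms [g x k]. *)
Lemma cube_face_is_face I J : is_face (@unit_cube R d) (cube_face I J).
Proof.
pose a : pt := \row_k ((k \in J)%:R - (k \in I)%:R).
pose g (x : pt) k : R := (k \in J)%:R * (1 - x 0 k) + (k \in I)%:R * x 0 k.
have slack x : \sum_k (k \in J)%:R - dot a x = \sum_k g x k.
  by rewrite /dot -sumrB; apply: eq_bigr => k _; rewrite mxE /g; ring.
have g_ge0 x k : unit_cube x -> 0 <= g x k.
  move=> /(_ k) /andP [x0 x1].
  by rewrite addr_ge0 ?mulr_ge0 ?ler0n ?subr_ge0.
have g_eq0 x k : unit_cube x ->
    (g x k == 0) = ((k \in I) ==> (x 0 k == 0)) && ((k \in J) ==> (x 0 k == 1)).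
  move=> /(_ k) /andP [x0 x1].
  rewrite /g paddr_eq0 ?mulr_ge0 ?ler0n ?subr_ge0 // !mulf_eq0 subr_eq0 !pnatr_eq0.
  by rewrite !eqb0 !implybE andbC [1 == _]eq_sym.
exists a, (\sum_k (k \in J)%:R); split=> [x cx | x].
  by rewrite -subr_ge0 slack; apply: sumr_ge0 => k _; exact: g_ge0.
split=> [[cx [xI xJ]] | [cx /eqP]].
  split=> //; apply/eqP; rewrite eq_sym -subr_eq0 slack; apply/eqP/big1 => k _.
  apply/eqP; rewrite g_eq0 //; apply/andP; split; apply/implyP => kin; apply/eqP.
    exact: xI.
  exact: xJ.
rewrite eq_sym -subr_eq0 slack => /eqP /(psumr_eq0P (fun k _ => g_ge0 x k cx)) gx0.
split=> //; split=> k kin; have /eqP := gx0 k isT; rewrite g_eq0 // kin /=.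
  by case/andP => /eqP.
by case/andP => _ /eqP.
Qed.

End Cube.

Section FaceIso.
Variables (R : realType) (d : nat) (C : 'rV[R]_d -> Prop).
Variable phi : ('rV[R]_d -> Prop) -> ('rV[R]_d -> Prop).
Hypothesis phi_iso : face_iso C phi.
Implicit Types I J : {set 'I_d}.
Local Notation rk I J := (\rank (linmx (Cface phi I J))).

Lemma Cface_is_face I J : is_face C (Cface phi I J).
Proof. by apply: phi_iso.1; exact: cube_face_is_face. Qed.

Lemma Cface_subset I J I' J' :
  Defs.subset (@cube_face R d I J) (cube_face I' J') <->
  Defs.subset (Cface phi I J) (Cface phi I' J').
Proof.
by have [_ [_ [_ iso_sub]]] := phi_iso; apply: iso_sub; exact: cube_face_is_face.
Qed.

Lemma Cface_nonempty I J : [disjoint I & J] -> exists p, Cface phi I J p.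
Proof.
move=> dIJ; apply: contrapT => empty.
have [_ [_ [_ phi_sub]]] := phi_iso.
have : Defs.subset (Cface phi I J) (phi (fun _ => False)).
  by move=> p Fp; case: empty; exists p.
move/(phi_sub _ _ (cube_face_is_face I J) (is_face_empty _))/(_ (cube_vertex J)).
by apply; apply/cube_face_vertex.
Qed.

Lemma linmx_CfaceS I J I' J' : I' \subset I -> J' \subset J ->
  (linmx (Cface phi I J) <= linmx (Cface phi I' J'))%MS.
Proof. by move=> sI sJ; apply/linmxS/Cface_subset; exact: cube_faceS. Qed.

Lemma Cface_subset_of_linmx I J I' J' : [disjoint I :|: I' & J :|: J'] ->
  (linmx (Cface phi I' J') <= linmx (Cface phi I J))%MS ->
  Defs.subset (@cube_face R d I' J') (cube_face I J).
Proof.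
move=> dis sub; have [p Fp] := Cface_nonempty dis.
have Fp_sub I0 J0 : I0 \subset I :|: I' -> J0 \subset J :|: J' -> Cface phi I0 J0 p.
  by move=> sI sJ; apply: (Cface_subset _ _ _ _).1 Fp; exact: cube_faceS.
have F1p := Fp_sub I J (subsetUl _ _) (subsetUl _ _).
have F2p := Fp_sub I' J' (subsetUr _ _) (subsetUr _ _).
by apply/Cface_subset/(face_linmx_subset (Cface_is_face _ _) (Cface_is_face _ _) F1p F2p).
Qed.

Lemma Cface_rank_ltD1 I J k : [disjoint I & J] -> k \in I :|: J ->
  (rk I J < rk (I :\ k) (J :\ k))%N.
Proof.
move=> dIJ kIJ; have [p Fp] := Cface_nonempty dIJ.
apply: (face_rank_lt (Cface_is_face _ _) (Cface_is_face _ _) Fp).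
  by apply/Cface_subset/cube_faceS; exact: subsetDl.
move/Cface_subset => sub.
case/setUP: kIJ => [kI | kJ].
  have vI : @cube_face R d (I :\ k) (J :\ k) (cube_vertex (k |: J)).
    apply/cube_face_vertex; split; last exact: subset_trans (subsetDl _ _) (subsetUr _ _).
    rewrite disjoint_subset; apply/subsetP => m; rewrite !inE => /andP [mk mI].
    by rewrite (negbTE mk) (disjointFr dIJ mI).
  by have /cube_face_vertex [/disjointFr /(_ kI)] := sub _ vI; rewrite setU11.
have vJ : @cube_face R d (I :\ k) (J :\ k) (cube_vertex (J :\ k)).
  apply/cube_face_vertex; split=> //.
  by apply: disjointWl (subsetDl _ _) _; apply: disjointWr (subsetDl _ _) dIJ.
by have /cube_face_vertex [_ /subsetP /(_ k kJ)] := sub _ vJ; rewrite setD11.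
Qed.

Lemma Cface_rank_drop I J I' J' : [disjoint I & J] -> I' \subset I -> J' \subset J ->
  (rk I J + #|(I :|: J) :\: (I' :|: J')| <= rk I' J')%N.
Proof.
move Dn : #|(I :|: J) :\: (I' :|: J')| => n; elim: n I J Dn => [|n IH] I J Dn dIJ sI sJ.
  by rewrite addn0; apply: mxrankS; exact: linmx_CfaceS.
have /set0Pn [k] : (I :|: J) :\: (I' :|: J') != set0 by rewrite -card_gt0 Dn.
rewrite inE => /andP [kI'J' kIJ].
have dIJk : [disjoint I :\ k & J :\ k].
  by apply: disjointWl (subsetDl _ _) _; apply: disjointWr (subsetDl _ _) dIJ.
have [sIk sJk] : I' \subset I :\ k /\ J' \subset J :\ k.
  by move: kI'J'; rewrite !subsetD1 sI sJ inE negb_or => /andP [-> ->].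
have Dnk : #|(I :\ k :|: J :\ k) :\: (I' :|: J')| = n.
  rewrite -setDUl setDDl [[set k] :|: _]setUC -setDDl.
  by move: (cardsD1 k ((I :|: J) :\: (I' :|: J'))); rewrite Dn in_setD kI'J' kIJ; lia.
have := IH _ _ Dnk dIJk sIk sJk; have := Cface_rank_ltD1 dIJ kIJ; lia.
Qed.

Lemma Cface_rank I J : [disjoint I & J] -> (rk I J + #|I :|: J| = d)%N.
Proof.
move=> dIJ; apply/eqP; rewrite eqn_leq; apply/andP; split.
  have := Cface_rank_drop dIJ (sub0set I) (sub0set J); rewrite setU0 setD0.
  by move/leq_trans; apply; exact: rank_leq_col.
pose K := ~: (I :|: J).
have dIKJ : [disjoint I :|: K & J].
  by rewrite disjoints_subset subUset -disjoints_subset dIJ setCS subsetUr.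
have := Cface_rank_drop dIKJ (subsetUl I K) (subxx J).
have -> : (I :|: K :|: J) :\: (I :|: J) = K.
  by apply/setP => m; rewrite !inE; case: (m \in I); case: (m \in J).
by have := cardsC (I :|: J); rewrite card_ord -/K; lia.
Qed.

End FaceIso.

Theorem corollary3p2 (R : realType) (d : nat) (C : 'rV[R]_d -> Prop)
  (phi : ('rV[R]_d -> Prop) -> ('rV[R]_d -> Prop)) (x y z : 'I_d) :
  3 <= d ->
  smooth C ->
  face_iso C phi ->
  x != y -> y != z -> x != z ->
  parallel (Cface phi [set x; z] set0) (Cface phi [set x] [set z]) ->
  parallel (Cface phi [set y; z] set0) (Cface phi [set y] [set z]) ->
  parallel (Cface phi [set z] set0) (Cface phi set0 [set z]).
Proof.
move=> _ _ iso xy yz xz /parallel_eqmx par_x /parallel_eqmx par_y; apply/parallel_eqmx.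
pose L I J := linmx (Cface phi I J).
have dis0 (I : {set 'I_d}) : [disjoint I & set0] by rewrite disjoints_subset setC0 subsetT.
have dis0' (J : {set 'I_d}) : [disjoint set0 & J] by rewrite disjoint_sym.
have rank_z : (\rank (L [set z] set0)).+1 = d.
  by have := Cface_rank iso (dis0 [set z]); rewrite setU0 cards1 addn1.
have rank_z' : (\rank (L set0 [set z])).+1 = d.
  by have := Cface_rank iso (dis0' [set z]); rewrite set0U cards1 addn1.
have rank_xz : (\rank (L [set x; z] set0)).+2 = d.
  by have := Cface_rank iso (dis0 [set x; z]); rewrite setU0 cards2 xz addn2.
have yz_notin_xz : ~~ (L [set y; z] set0 <= L [set x; z] set0)%MS.
  apply/negP => /(Cface_subset_of_linmx iso); rewrite !setU0.
  move=> /(_ (dis0 _) (cube_vertex [set x])); rewrite !cube_face_vertex.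
  rewrite !(disjoint_sym _ [set x]) !disjoints1 !inE eqxx (negbTE xy) (negbTE xz).
  by move=> /(_ (conj isT (sub0set _))) [].
have span_z : (L [set x; z] set0 + L [set y; z] set0 == L [set z] set0)%MS.
  apply: addsmx_eq_codim1 yz_notin_xz; rewrite ?(linmx_CfaceS iso) ?subsetUr //.
  by apply: succn_inj; rewrite rank_z.
have sub_z : (L [set z] set0 <= L set0 [set z])%MS.
  rewrite -(eqmxP span_z) addsmx_sub (eqmxP par_x) (eqmxP par_y).
  by rewrite !(linmx_CfaceS iso) ?sub0set.
by rewrite -(mxrank_leqif_eq sub_z).2 -eqSS rank_z rank_z'.
Qed.
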